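(* Let $\mathcal{H}_A\cong\mathbb{C}^d$ and let $M=\{M_0,M_1\}$, $N=\{N_0,N_1\}$ be two-outcome projective measurements on $\mathcal{H}_A$ (i.e. $M_0,M_1$ orthogonal projectors with $M_0+M_1=I$, and likewise for $N$), with $M\neq N$, and let $\Phi_M,\Phi_N:\mathcal{L}(\mathcal{H}_A)\to\mathcal{L}(\mathbb{C}^2)$ be the corresponding measurement channels. If $\Phi_M,\Phi_N$ form a Maximal Entanglement Worst Case pair, i.e. $\|\Phi_M-\Phi_N\|_\diamond=d\,\|\Phi_M-\Phi_N\|_{\mathrm{ME}}$, then $M$ and $N$ are different coarse-grainings of one projective measurement: there exist mutually orthogonal projectors $P_1,P_2,P_3$ with $P_1+P_2+P_3=I$ and $P_2$ of rank one such that either $(M_0,N_0)=(P_1+P_2,P_1)$ or $(M_0,N_0)=(P_1,P_1+P_2)$. Furthermore, in this case the channels are perfectly distinguishable: $\|\Phi_M-\Phi_N\|_\diamond=2$. *)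

From HB Require Import structures.
From mathcomp Require Import all_boot all_order all_algebra.
From mathcomp Require Import classical_sets reals.
From mathcomp Require Import complex.
From mathcomp Require mxtens.

Set Implicit Arguments.
Unset Strict Implicit.
Unset Printing Implicit Defensive.

Import Order.TTheory GRing.Theory Num.Theory.
Local Open Scope ring_scope.
Local Open Scope complex_scope.
Local Open Scope classical_set_scope.

Section QuantumDefs.
Variable R : realType.
Local Notation C := (R[i]).

Definition adj m n (A : 'M[C]_(m, n)) : 'M[C]_(n, m) := (map_mx Num.Def.conjC A)^T.

Definition is_projector n (P : 'M[C]_n) : Prop :=
  P *m P = P /\ adj P = P.

Definition is_proj_meas2 n (M0 M1 : 'M[C]_n) : Prop :=
  is_projector M0 /\ is_projector M1 /\ M0 + M1 = 1%:M.

Definition is_state n (rho : 'M[C]_n) : Prop :=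
  adj rho = rho /\
  (forall v : 'rV[C]_n, 0 <= (v *m rho *m adj v) 0 0) /\
  \tr rho = 1.

(* trace norm ||A||_1 = tr sqrt(A^dagger A) = sum of the singular values,
   i.e. the sum of the square roots of the eigenvalues of the (normal,
   positive semidefinite) matrix A^dagger A, given by the spectral theorem. *)
Definition trnorm n (A : 'M[C]_n) : R :=
  \sum_(i < n) complex.Re (sqrtC (spectral_diag (adj A *m A) 0 i)).

Definition meas_channel n (M0 M1 : 'M[C]_n) (X : 'M[C]_n) : 'M[C]_2 :=
  \tr (M0 *m X) *: delta_mx 0 0 + \tr (M1 *m X) *: delta_mx 1 1.

(* (Phi (x) id_k)(rho) on C^m (x) C^k, with the product basis |x>|j>
   indexed by mxtens_index (x, j). *)
Definition tens_id m n k (Phi : 'M[C]_m -> 'M[C]_n) (rho : 'M[C]_(m * k))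
  : 'M[C]_(n * k) :=
  \matrix_(r, c)
    (let rj := mxtens.mxtens_unindex r in
     let cl := mxtens.mxtens_unindex c in
     Phi (\matrix_(x, y) rho (mxtens.mxtens_index (x, rj.2))
                             (mxtens.mxtens_index (y, cl.2))) rj.1 cl.1).

Definition diamond_norm m n (Phi : 'M[C]_m -> 'M[C]_n) : R :=
  sup [set trnorm (tens_id Phi rho) | rho in [set rho : 'M[C]_(m * m) | is_state rho]].

(* maximally entangled state |Omega><Omega|, Omega = d^{-1/2} sum_i |i>|i> *)
Definition max_ent d : 'M[C]_(d * d) :=
  \matrix_(r, c)
    (let xj := mxtens.mxtens_unindex r in
     let yl := mxtens.mxtens_unindex c in
     if (xj.1 == xj.2) && (yl.1 == yl.2) then (d%:R)^-1 else 0).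

Definition me_norm m n (Phi : 'M[C]_m -> 'M[C]_n) : R :=
  trnorm (tens_id Phi (max_ent m)).

End QuantumDefs.

From HB Require Import structures.
From mathcomp Require Import all_boot all_order all_algebra.
From mathcomp Require Import classical_sets reals.
From mathcomp Require Import complex.
From mathcomp Require Import sesquilinear spectral mxtens.
From mathcomp Require Import ring.

(* Write D = M0 - N0.  The difference of the two measurement channels is
   X |-> tr(D X) Z with Z = diag(1, -1), so its extension maps a state rho of
   C^d (x) C^d to Z (x) X_rho, where X_rho is the partial trace of
   (D (x) 1) rho; the trace norm of this output is 2 ||X_rho||_1.  Pairing the
   Hermitian matrix X_rho with its sign matrix S gives
   ||X_rho||_1 = tr((D (x) S) rho) <= max_i |mu_i|, mu the eigenvalues of D,
   whereas on the maximally entangled state X_rho = D^T / d, so that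
   d ||.||_ME = 2 sum_i |mu_i|.  The hypothesis therefore leaves D a single
   nonzero eigenvalue: M0 = N0 + lam w w^*.  Squaring this identity of
   projectors gives lam = 1 and N0 w = 0, or lam = -1 and M0 w = 0; the
   smaller projector, w w^* and the complement of their sum are the required
   family, and the diamond norm is 2 |lam| = 2. *)

Set Implicit Arguments.
Unset Strict Implicit.
Unset Printing Implicit Defensive.
Import Order.TTheory GRing.Theory Num.Theory.
Local Open Scope ring_scope.
Local Open Scope sesquilinear_scope.

Lemma char_poly_conj (R : comUnitRingType) n (P A : 'M[R]_n) :
  P \in unitmx -> char_poly (invmx P *m A *m P) = char_poly A.
Proof.
move=> Pu; have conj_char : char_poly_mx (invmx P *m A *m P) =
    map_mx polyC (invmx P) *m char_poly_mx A *m map_mx polyC P.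
  rewrite /char_poly_mx mulmxBr mulmxBl !map_mxM -!mulmxA -scalar_mxC.
  by congr (_ - _); rewrite mulmxA -map_mxM mulVmx // map_mx1 mul1mx.
rewrite /char_poly conj_char !det_mulmx mulrC mulrA -det_mulmx -map_mxM.
by rewrite mulmxV // map_mx1 det1 mul1r.
Qed.

Lemma similar_diag_perm_eq (F : fieldType) n (P Q : 'M[F]_n) (a b : 'rV[F]_n) :
  P \in unitmx -> Q \in unitmx ->
  invmx P *m diag_mx a *m P = invmx Q *m diag_mx b *m Q ->
  perm_eq [seq a 0 i | i <- enum 'I_n] [seq b 0 i | i <- enum 'I_n].
Proof.
move=> Pu Qu PQ; apply: prod_XsubC_eq.
have char_diag (c : 'rV[F]_n) :
    char_poly (diag_mx c) = \prod_(x <- [seq c 0 i | i <- enum 'I_n]) ('X - x%:P).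
  rewrite char_poly_trig ?diag_mx_is_trig // big_map big_enum /=.
  by apply: eq_bigr => i _; rewrite mxE eqxx mulr1n.
by rewrite -!char_diag -(char_poly_conj _ Pu) PQ char_poly_conj.
Qed.

Lemma sum_mxtens (V : nmodType) m n (F : 'I_(m * n) -> V) :
  \sum_k F k = \sum_i \sum_j F (mxtens_index (i, j)).
Proof.
rewrite pair_big /=; apply: reindex; exists (@mxtens_unindex m n) => [[i j] _|k _].
  by rewrite mxtens_indexK.
by rewrite -surjective_pairing mxtens_unindexK.
Qed.

Lemma tens_diag_mx (R : comPzRingType) m n (a : 'rV[R]_m) (b : 'rV[R]_n) :
  diag_mx a *t diag_mx b =
  diag_mx (\row_k (a 0 (mxtens_unindex k).1 * b 0 (mxtens_unindex k).2)).
Proof.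
apply/matrixP => i j.
case: (mxtens_indexP i) => x y; case: (mxtens_indexP j) => z w.
rewrite tensmxE !mxE !mxtens_indexK (inj_eq (can_inj (@mxtens_indexK _ _))).
rewrite xpair_eqE; case: (x == z); case: (y == w);
  by rewrite ?mulr0n ?mulr1n ?mulr0 ?mul0r.
Qed.

Lemma tensmx11 (R : comPzRingType) m n :
  (1%:M : 'M[R]_m) *t (1%:M : 'M[R]_n) = 1%:M.
Proof.
rewrite -!diag_const_mx tens_diag_mx; congr diag_mx.
by apply/rowP => k; rewrite !mxE mulr1.
Qed.

Lemma psum_le_term_eq0 (R : numDomainType) n (F : 'I_n -> R) x0 :
  (forall j, 0 <= F j) -> \sum_j F j <= F x0 -> forall j, j != x0 -> F j = 0.
Proof.
move=> F_ge0 sum_le j j_neq.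
apply: (@psumr_eq0P _ _ (fun j => j != x0) F) j_neq => [k _|]; first exact: F_ge0.
apply/le_anti/andP; split; last by apply: sumr_ge0 => k _.
by move: sum_le; rewrite (bigD1 x0) //= gerDl.
Qed.

Section ClosedFieldMatrices.
Variable C : numClosedFieldType.

Lemma tensmx_adj m n p q (A : 'M[C]_(m, n)) (B : 'M[C]_(p, q)) :
  (A *t B)^t* = A^t* *t B^t*.
Proof. by apply/matrixP => i j; rewrite !mxE rmorphM. Qed.

Lemma unitarymx1 n : (1%:M : 'M[C]_n) \is unitarymx.
Proof. by apply/unitarymxP; rewrite trmx1 map_mx1 mulmx1. Qed.

Lemma tensmx_unitary m n (U : 'M[C]_m) (V : 'M[C]_n) :
  U \is unitarymx -> V \is unitarymx -> U *t V \is unitarymx.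
Proof.
move=> /unitarymxP UU /unitarymxP VV; apply/unitarymxP.
by rewrite tensmx_adj tensmx_mul UU VV tensmx11.
Qed.

Lemma spectral_hermitian n (X : 'M[C]_n) : X^t* = X ->
  [/\ spectralmx X \is unitarymx,
      X = (spectralmx X)^t* *m diag_mx (spectral_diag X) *m spectralmx X &
      forall j, spectral_diag X 0 j \is Num.real].
Proof.
move=> Xh; have Xherm : X \is hermsymmx.
  by apply/is_hermitianmxP; rewrite expr0 scale1r Xh.
split; first exact: spectral_unitarymx.
  rewrite -invmx_unitary ?spectral_unitarymx //.
  exact/orthomx_spectralP/hermitian_normalmx.
by move=> j; have /mxOverP := hermitian_spectral_diag_real Xherm; apply.
Qed.

Lemma unitary_diag_hermitian n (W : 'M[C]_n) (xi : 'rV[C]_n) :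
  (forall j, xi 0 j \is Num.real) ->
  (W^t* *m diag_mx xi *m W)^t* = W^t* *m diag_mx xi *m W.
Proof.
move=> xi_real; rewrite !trmx_mul !map_mxM trmxCK tr_diag_mx map_diag_mx mulmxA.
by congr (_ *m diag_mx _ *m _); apply/rowP => j; rewrite mxE; exact/CrealP/xi_real.
Qed.

Lemma unitary_diag_single n (V : 'M[C]_n) (mu : 'rV[C]_n) x0 :
  (forall j, j != x0 -> mu 0 j = 0) ->
  V^t* *m diag_mx mu *m V = mu 0 x0 *: ((row x0 V)^t* *m row x0 V).
Proof.
move=> mu_eq0; apply/matrixP => i j; rewrite mxE mul_mx_diag !mxE.
rewrite (bigD1 x0) //= big1 ?addr0 => [|x x_neq]; last first.
  by rewrite !mxE mu_eq0 // mulr0 mul0r.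
by rewrite !mxE big_ord1 !mxE mulrCA mulrA.
Qed.

Lemma row_unitary_norm n (V : 'M[C]_n) x0 : V \is unitarymx ->
  row x0 V *m (row x0 V)^t* = 1%:M.
Proof.
move=> /unitarymxP /matrixP /(_ x0 x0); rewrite !mxE eqxx => VV.
by apply/matrixP => i j; rewrite !ord1 !mxE -VV; apply: eq_bigr => k _; rewrite !mxE.
Qed.

Lemma projector_rank_one_update n (P Q : 'M[C]_n) (w : 'cV[C]_n) (lam : C) :
  P *m P = P -> Q *m Q = Q -> w^t* *m w = 1%:M -> lam != 0 ->
  P = Q + lam *: (w *m w^t*) ->
  (lam = 1 /\ Q *m w = 0) \/ (lam = -1 /\ P *m w = 0).
Proof.
move=> PP QQ w_unit lam_neq0 PE.
have scalev_inj c1 c2 : c1 *: w = c2 *: w -> c1 = c2.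
  move=> /(congr1 (mulmx (w^t*))); rewrite -!scalemxAr w_unit !scalemx1.
  by move=> /matrixP /(_ 0 0); rewrite !mxE eqxx !mulr1n.
set a : C := (w^t* *m Q *m w) 0 0.
have wQw : w^t* *m Q *m w = a%:M := mx11_scalar _.
have Pw : P *m w = Q *m w + lam *: w.
  by rewrite PE mulmxDl -scalemxAl -mulmxA w_unit mulmx1.
have PQw : P *m (Q *m w) = Q *m w + (lam * a) *: w.
  rewrite PE mulmxDl mulmxA QQ -scalemxAl -!mulmxA [w^t* *m _]mulmxA wQw.
  by rewrite mul_mx_scalar scalerA.
have Qw : Q *m w = (1 - a - lam) *: w.
  have : P *m (P *m w) = P *m w by rewrite mulmxA PP.
  rewrite {1}Pw mulmxDr -scalemxAr PQw Pw; move: (Q *m w) => u /colP PPw.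
  apply/colP => i; apply: (mulfI lam_neq0); move: (PPw i); rewrite !mxE => PPwi.
  apply/eqP; rewrite -subr_eq0; apply/eqP.
  transitivity ((u i 0 + lam * a * w i 0 + lam * (u i 0 + lam * w i 0)) -
    (u i 0 + lam * w i 0)); first ring.
  by rewrite PPwi subrr.
have a_eq : a = 1 - a - lam.
  move: wQw; rewrite -mulmxA Qw -scalemxAr w_unit scalemx1.
  by move=> /matrixP /(_ 0 0); rewrite !mxE eqxx !mulr1n.
rewrite -a_eq in Qw.
have a_idem : a * a = a.
  by apply: scalev_inj; rewrite -scalerA -Qw scalemxAr -Qw mulmxA QQ.
have : a * (a - 1) == 0 by rewrite mulrBr mulr1 a_idem subrr.
rewrite mulf_eq0 subr_eq0 => /orP [] /eqP a01.
- left; split; last by rewrite Qw a01 scale0r.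
  by rewrite a01 subr0 in a_eq; apply/eqP; rewrite eq_sym -subr_eq0 -a_eq.
- have lam_N1 : lam = -1 by rewrite a01 subrr sub0r in a_eq; rewrite -[lam]opprK -a_eq.
  by right; split; rewrite // Pw Qw a01 lam_N1 scale1r scaleN1r addrN.
Qed.

End ClosedFieldMatrices.

Section ComplexMatrices.
Variable R : realType.
Local Notation C := R[i].

Lemma adjE m n (A : 'M[C]_(m, n)) : adj A = A^t*.
Proof. by rewrite /adj map_trmx. Qed.

Lemma trnorm_unitary_diag n (A U : 'M[C]_n) (s : 'rV[C]_n) :
  U \is unitarymx -> A^t* *m A = U^t* *m diag_mx s *m U ->
  trnorm A = \sum_i complex.Re (sqrtC (s 0 i)).
Proof.
move=> Uu AAE; rewrite /trnorm adjE.
set B := A^t* *m A in AAE *.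
have /orthomx_spectralP BE : B \is normalmx.
  by apply/normalmxP; rewrite /B trmx_mul map_mxM trmxCK.
have /similar_diag_perm_eq : invmx (spectralmx B) *m diag_mx (spectral_diag B) *m
    spectralmx B = invmx U *m diag_mx s *m U.
  by apply: (etrans (esym BE)); rewrite AAE (invmx_unitary Uu).
move=> /(_ (spectral_unit _) (unitarymx_unit Uu)) perm.
have := @perm_big R +%R 0 _ _ _ predT (fun x => complex.Re (sqrtC x)) perm.
by rewrite !big_map.
Qed.

Lemma trnorm_tens_unitary k n (U : 'M[C]_k) (X : 'M[C]_n) :
  U \is unitarymx -> trnorm (U *t X) = k%:R * trnorm X.
Proof.
move=> /unitarymxP /mulmx1C UtU.
have /orthomx_spectralP XXE : X^t* *m X \is normalmx.
  by apply/normalmxP; rewrite trmx_mul map_mxM trmxCK.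
set V := spectralmx _ in XXE; set s := spectral_diag _ in XXE.
pose one : 'rV[C]_k := const_mx 1.
rewrite (trnorm_unitary_diag (U := 1%:M *t V)
  (s := \row_r (one 0 (mxtens_unindex r).1 * s 0 (mxtens_unindex r).2))).
- rewrite sum_mxtens.
  under eq_bigr => i _ do under eq_bigr => j _ do rewrite !mxE mxtens_indexK mul1r.
  by rewrite /= sumr_const card_ord mulr_natl /trnorm adjE.
- exact/tensmx_unitary/spectral_unitarymx/unitarymx1.
rewrite -tens_diag_mx !tensmx_adj !tensmx_mul UtU XXE.
by rewrite (invmx_unitary (spectral_unitarymx _)) diag_const_mx trmx1 map_mx1 !mul1mx.
Qed.

Lemma trnorm_hermitian n (X W : 'M[C]_n) (xi : 'rV[C]_n) :
  W \is unitarymx -> (forall j, xi 0 j \is Num.real) ->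
  X = W^t* *m diag_mx xi *m W -> trnorm X = \sum_j complex.Re `|xi 0 j|.
Proof.
move=> Wu xi_real XE.
have Xh : X^t* = X by rewrite XE unitary_diag_hermitian.
rewrite (trnorm_unitary_diag (s := \row_j (xi 0 j ^+ 2)) Wu).
  by apply: eq_bigr => j _; rewrite mxE -real_normK ?sqrCK.
rewrite Xh {1}XE -!mulmxA; congr (_ *m _).
rewrite XE !mulmxA (mulmxtVK _ Wu) mulmx_diag.
by congr (diag_mx _ *m _); apply/rowP => j; rewrite !mxE expr2.
Qed.

Lemma is_state_maximally_mixed n : (0 < n)%N ->
  is_state (n%:R^-1 *: 1%:M : 'M[C]_n).
Proof.
move=> n_gt0; split; [|split].
- rewrite adjE; apply/matrixP => i j; rewrite !mxE.
  by rewrite rmorphM fmorphV !rmorph_nat eq_sym.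
- move=> v; rewrite -scalemxAr mulmx1 -scalemxAl mxE.
  apply: mulr_ge0; first by rewrite invr_ge0 ler0n.
  rewrite mxE; apply: sumr_ge0 => i _; rewrite !mxE.
  exact: mul_conjC_ge0.
- by rewrite mxtraceZ mxtrace1 mulVf // pnatr_eq0 -lt0n.
Qed.

Lemma mxtrace_state_le n (rho U : 'M[C]_n) (a : 'rV[C]_n) (c : C) :
  is_state rho -> U \is unitarymx -> (forall r, a 0 r <= c) ->
  \tr (U^t* *m diag_mx a *m U *m rho) <= c.
Proof.
move=> [_ [rho_ge0 rho_tr1]] Uu a_le.
set sigma := U *m rho *m U^t*.
have sigma_diag r : sigma r r = (row r U *m rho *m (row r U)^t*) 0 0.
  rewrite !mxE; apply: eq_bigr => x _; rewrite !mxE; congr (_ * _).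
  by apply: eq_bigr => y _; rewrite !mxE.
have sigma_ge0 r : 0 <= sigma r r by rewrite sigma_diag -adjE; apply: rho_ge0.
have sigma_tr1 : \sum_r sigma r r = 1.
  rewrite -[LHS]/(\tr sigma) mxtrace_mulC mulmxA.
  by rewrite (mulmx1C (unitarymxP Uu)) mul1mx.
have -> : \tr (U^t* *m diag_mx a *m U *m rho) = \sum_r a 0 r * sigma r r.
  rewrite -mulmxA mxtrace_mulC !mulmxA mxtrace_mulC -!mulmxA /mxtrace.
  by apply: eq_bigr => r _; rewrite mul_diag_mx mxE /sigma !mulmxA.
apply: le_trans (_ : \sum_r c * sigma r r <= c).
  by apply: ler_sum => r _; apply: ler_wpM2r.
by rewrite -mulr_sumr sigma_tr1 mulr1.
Qed.

Lemma rank_one_refinement n (Q : 'M[C]_n) (w : 'cV[C]_n) :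
  is_projector Q -> w^t* *m w = 1%:M -> Q *m w = 0 ->
  let E := w *m w^t* in let Q' := 1%:M - Q - E in
  is_projector Q /\ is_projector E /\ is_projector Q' /\
  (Q *m E = 0 /\ E *m Q = 0) /\ (Q *m Q' = 0 /\ Q' *m Q = 0) /\
  (E *m Q' = 0 /\ Q' *m E = 0) /\ Q + E + Q' = 1%:M /\ \rank E = 1%N.
Proof.
move=> Q_proj w_unit Qw E Q'; have [QQ Qh] := Q_proj.
rewrite /is_projector !adjE in Qh *.
have Ew : E *m w = w by rewrite -mulmxA w_unit mulmx1.
have EE : E *m E = E by rewrite mulmxA Ew.
have Eh : E^t* = E by rewrite trmx_mul map_mxM trmxCK.
have QE : Q *m E = 0 by rewrite mulmxA Qw mul0mx.
have EQ : E *m Q = 0 by rewrite -Eh -Qh -map_mxM -trmx_mul QE trmx0 map_mx0.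
have QQ' : Q *m Q' = 0 by rewrite !mulmxBr mulmx1 QQ QE !subrr.
have Q'Q : Q' *m Q = 0 by rewrite !mulmxBl mul1mx QQ EQ !subrr.
have EQ' : E *m Q' = 0 by rewrite !mulmxBr mulmx1 EQ EE subr0 subrr.
have Q'E : Q' *m E = 0 by rewrite !mulmxBl mul1mx QE EE subr0 subrr.
have Q'Q' : Q' *m Q' = Q' by rewrite {1}/Q' !mulmxBl mul1mx QQ' EQ' !subr0.
have Q'h : Q'^t* = Q' by rewrite /Q' !linearB /= !map_mxB /= trmx1 map_mx1 Qh Eh.
have sum1 : Q + E + Q' = 1%:M.
  by rewrite /Q' -[1%:M - Q - E]addrA -opprD addrC addrA subrr add0r.
have rankE : \rank E = 1%N.
  apply/eqP; rewrite eqn_leq (leq_trans (mxrankM_maxl _ _) (rank_leq_col w)) /=.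
  have := mxrankM_maxr (w^t*) w; rewrite w_unit mxrank1 => rank_w.
  by rewrite (leq_trans rank_w) // -{1}Ew mxrankM_maxl.
by do !split.
Qed.

Definition coarse_grainings n (M0 N0 : 'M[C]_n) : Prop :=
  exists P1 P2 P3 : 'M[C]_n,
     is_projector P1 /\ is_projector P2 /\ is_projector P3 /\
     (P1 *m P2 = 0 /\ P2 *m P1 = 0) /\
     (P1 *m P3 = 0 /\ P3 *m P1 = 0) /\
     (P2 *m P3 = 0 /\ P3 *m P2 = 0) /\
     P1 + P2 + P3 = 1%:M /\
     \rank P2 = 1%N /\
     ((M0 = P1 + P2 /\ N0 = P1) \/ (M0 = P1 /\ N0 = P1 + P2)).

Lemma projector_rank_one_gap n (M0 N0 : 'M[C]_n) (w : 'cV[C]_n) (lam : C) :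
  is_projector M0 -> is_projector N0 -> w^t* *m w = 1%:M -> lam != 0 ->
  M0 = N0 + lam *: (w *m w^t*) -> coarse_grainings M0 N0 /\ `|lam| = 1.
Proof.
move=> M0_proj N0_proj w_unit lam_neq0 M0E.
have [[lam1 N0w] | [lamN1 M0w]] :=
  projector_rank_one_update M0_proj.1 N0_proj.1 w_unit lam_neq0 M0E.
- split; last by rewrite lam1 normr1.
  have [PN [PE [PQ' [NE [NQ' [EQ' [sum1 rankE]]]]]]] :=
    rank_one_refinement N0_proj w_unit N0w.
  exists N0, (w *m w^t*), (1%:M - N0 - w *m w^t*); do 8 (split => //).
  by left; rewrite M0E lam1 scale1r.
- split; last by rewrite lamN1 normrN normr1.
  have [PM [PE [PQ' [ME [MQ' [EQ' [sum1 rankE]]]]]]] :=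
    rank_one_refinement M0_proj w_unit M0w.
  exists M0, (w *m w^t*), (1%:M - M0 - w *m w^t*); do 8 (split => //).
  by right; rewrite M0E lamN1 scaleN1r subrK.
Qed.

Definition pauli_z : 'M[C]_2 := delta_mx 0 0 - delta_mx 1 1.

Lemma pauli_z_unitary : pauli_z \is unitarymx.
Proof.
apply/unitarymxP/matrixP => i j; rewrite !mxE !big_ord_recl big_ord0 !mxE.
case: i => [[|[|i]] ?]; case: j => [[|[|j]] ?] //=;
  by rewrite ?conjC0 ?conjC1 ?conjCN; ring.
Qed.

Definition sigmaz_channel m (D X : 'M[C]_m) : 'M[C]_2 := \tr (D *m X) *: pauli_z.

Lemma meas_channel_diff n (M0 M1 N0 N1 X : 'M[C]_n) :
  M0 + M1 = 1%:M -> N0 + N1 = 1%:M ->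
  meas_channel M0 M1 X - meas_channel N0 N1 X = sigmaz_channel (M0 - N0) X.
Proof.
move=> /(canRL (addKr _)) -> /(canRL (addKr _)) ->.
rewrite /meas_channel /sigmaz_channel /pauli_z !mulmxDl !mulNmx !mul1mx.
rewrite !mxtraceD !raddfN.
by apply/matrixP => i j; rewrite !mxE; ring.
Qed.

Section PartialTrace.
Variables (m k : nat).

Definition tens_block (rho : 'M[C]_(m * k)) j l : 'M[C]_m :=
  \matrix_(x, y) rho (mxtens_index (x, j)) (mxtens_index (y, l)).

(* [ptrace_mul D rho] is the partial trace over the first factor of
   (D (x) 1) rho. *)
Definition ptrace_mul (D : 'M[C]_m) rho : 'M[C]_k :=
  \matrix_(j, l) \tr (D *m tens_block rho j l).

Lemma tens_id_sigmaz D rho :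
  tens_id (sigmaz_channel D) rho = pauli_z *t ptrace_mul D rho.
Proof. by apply/matrixP => r c; rewrite !mxE /= !mxE mulrC. Qed.

Lemma mxtrace_mul_tens_block D rho j l : \tr (D *m tens_block rho j l) =
  \sum_x \sum_y D x y * rho (mxtens_index (y, j)) (mxtens_index (x, l)).
Proof.
apply: eq_bigr => x _; rewrite mxE.
by apply: eq_bigr => y _; rewrite mxE.
Qed.

Lemma ptrace_mul_hermitian D rho : D^t* = D -> rho^t* = rho ->
  (ptrace_mul D rho)^t* = ptrace_mul D rho.
Proof.
move=> Dh rhoh; apply/matrixP => j l.
rewrite !mxE !mxtrace_mul_tens_block rmorph_sum /=.
rewrite exchange_big /=; apply: eq_bigr => x _; rewrite rmorph_sum /=.
by apply: eq_bigr => y _; rewrite rmorphM /= -[in RHS]Dh -[in RHS]rhoh !mxE.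
Qed.

Lemma mxtrace_tens_ptrace D S rho :
  \tr ((D *t S) *m rho) = \tr (S *m ptrace_mul D rho).
Proof.
rewrite /mxtrace; transitivity (\sum_x \sum_l \sum_y \sum_j
    D x y * S l j * rho (mxtens_index (y, j)) (mxtens_index (x, l))).
  rewrite sum_mxtens; apply: eq_bigr => x _; apply: eq_bigr => l _.
  rewrite mxE sum_mxtens; apply: eq_bigr => y _; apply: eq_bigr => j _.
  by rewrite tensmxE.
rewrite exchange_big /=; apply: eq_bigr => l _.
rewrite mxE; under [RHS]eq_bigr => j _ do rewrite mxE mxtrace_mul_tens_block mulr_sumr.
under eq_bigr => x _ do rewrite exchange_big /=.
rewrite exchange_big /=; apply: eq_bigr => j _; apply: eq_bigr => x _.
rewrite mulr_sumr; apply: eq_bigr => y _.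
by rewrite mulrA [S l j * _]mulrC.
Qed.

End PartialTrace.

Lemma ptrace_mul_max_ent m (D : 'M[C]_m) :
  ptrace_mul D (@max_ent R m) = m%:R^-1 *: D^T.
Proof.
apply/matrixP => j l; rewrite !mxE mxtrace_mul_tens_block.
under eq_bigr => x _ do under eq_bigr => y _ do rewrite mxE !mxtens_indexK /=.
rewrite (bigD1 l) //= [X in _ + X]big1 => [|x /negbTE xl]; last first.
  by apply: big1 => y _; rewrite xl andbF mulr0.
rewrite addr0 (bigD1 j) //= [X in _ + X]big1 => [|y /negbTE yj]; last first.
  by rewrite yj mulr0.
by rewrite !eqxx addr0 /= mulrC.
Qed.

Lemma trnorm_ptrace_mul_le m k (D V : 'M[C]_m) (mu : 'rV[C]_m)
    (rho : 'M[C]_(m * k)) (c : C) :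
  is_state rho -> V \is unitarymx -> (forall x, mu 0 x \is Num.real) ->
  D = V^t* *m diag_mx mu *m V -> (forall x, `|mu 0 x| <= c) ->
  trnorm (ptrace_mul D rho) <= complex.Re c.
Proof.
move=> rho_state Vu mu_real DE mu_le.
have rhoh : rho^t* = rho by rewrite -adjE; case: rho_state.
have Dh : D^t* = D by rewrite DE unitary_diag_hermitian.
have [Wu XE xi_real] := spectral_hermitian (ptrace_mul_hermitian Dh rhoh).
set X := ptrace_mul D rho in XE *.
set W := spectralmx X in Wu XE; set xi := spectral_diag X in XE xi_real.
(* With S the sign matrix of X, tr(S X) = ||X||_1 while D (x) S has
   eigenvalues +-mu_x. *)
set sgn : 'rV[C]_k := \row_j (-1) ^+ (xi 0 j < 0)%R.
set S := W^t* *m diag_mx sgn *m W.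
have trSX : \tr (S *m X) = \sum_j `|xi 0 j|.
  rewrite [X in _ *m X]XE /S !mulmxA mulmxtVK // -!mulmxA mxtrace_mulC mulmxA.
  rewrite mulmxtVK // mulmx_diag mxtrace_diag; apply: eq_bigr => j _.
  by rewrite !mxE real_normrEsign.
have DS : D *t S = (V *t W)^t* *m
    diag_mx (\row_r (mu 0 (mxtens_unindex r).1 * sgn 0 (mxtens_unindex r).2)) *m
    (V *t W).
  by rewrite tensmx_adj -tens_diag_mx !tensmx_mul -DE.
have : \tr (S *m X) <= c.
  rewrite -mxtrace_tens_ptrace DS; apply: mxtrace_state_le => //.
    exact: tensmx_unitary.
  move=> r; rewrite mxE; apply: le_trans (real_ler_norm _) _.
    by rewrite realM ?mu_real // mxE realX ?realN ?real1.
  by rewrite normrM mxE normr_sign mulr1.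
rewrite trSX lecE => /andP [_]; rewrite raddf_sum.
by rewrite (trnorm_hermitian Wu xi_real XE).
Qed.

Lemma trnorm_ptrace_mul_max_ent m (D V : 'M[C]_m) (mu : 'rV[C]_m) :
  (0 < m)%N -> V \is unitarymx -> (forall x, mu 0 x \is Num.real) ->
  D = V^t* *m diag_mx mu *m V ->
  m%:R * trnorm (ptrace_mul D (@max_ent R m)) = \sum_j complex.Re `|mu 0 j|.
Proof.
move=> m_gt0 Vu mu_real DE.
set Vc := map_mx Num.conj V.
have DTE : ptrace_mul D (@max_ent R m) =
    Vc^t* *m diag_mx (\row_j (mu 0 j / m%:R)) *m Vc.
  rewrite ptrace_mul_max_ent DE !trmx_mul tr_diag_mx.
  have -> : diag_mx (\row_j (mu 0 j / m%:R)) = m%:R^-1 *: diag_mx mu.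
    by apply/matrixP => i j; rewrite !mxE -mulrnAr !mulrnAr mulrC.
  have -> : Vc^t* = V^T by apply/matrixP => i j; rewrite !mxE conjCK.
  by rewrite -scalemxAr -scalemxAl mulmxA map_trmx trmxK.
rewrite (trnorm_hermitian _ _ DTE); last 2 first.
- by rewrite conjC_unitary.
- by move=> j; rewrite mxE realM ?mu_real // realV realn.
rewrite mulr_sumr; apply: eq_bigr => j _.
rewrite mxE mulr_natl -raddfMn -normrMn -[X in `|X|]mulr_natr.
by rewrite divfK // pnatr_eq0 -lt0n.
Qed.

End ComplexMatrices.

Section SigmazNorms.
Variables (R : realType) (d : nat) (D V : 'M[R[i]]_d) (mu : 'rV[R[i]]_d).
Hypotheses (d_gt0 : (0 < d)%N) (Vu : V \is unitarymx).
Hypotheses (mu_real : forall x, mu 0 x \is Num.real) (DE : D = V^t* *m diag_mx mu *m V).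

Lemma me_norm_sigmaz :
  d%:R * me_norm (sigmaz_channel D) = 2 * \sum_j complex.Re `|mu 0 j|.
Proof.
rewrite /me_norm tens_id_sigmaz trnorm_tens_unitary ?pauli_z_unitary // mulrCA.
by rewrite (trnorm_ptrace_mul_max_ent d_gt0 Vu mu_real DE).
Qed.

Lemma diamond_norm_sigmaz_le (c : R[i]) : (forall x, `|mu 0 x| <= c) ->
  diamond_norm (sigmaz_channel D) <= 2 * complex.Re c.
Proof.
move=> mu_le; apply: ge_sup.
  pose rho : 'M[R[i]]_(d * d) := (d * d)%N%:R^-1 *: 1%:M.
  exists (trnorm (tens_id (sigmaz_channel D) rho)); exists rho => //.
  by apply: is_state_maximally_mixed; rewrite muln_gt0 d_gt0.
move=> _ [rho rho_state <-].
rewrite tens_id_sigmaz trnorm_tens_unitary ?pauli_z_unitary //.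
by rewrite ler_wpM2l // (trnorm_ptrace_mul_le rho_state Vu mu_real DE mu_le).
Qed.

Lemma diamond_eq_me_rank_one :
  diamond_norm (sigmaz_channel D) = d%:R * me_norm (sigmaz_channel D) ->
  exists (w : 'cV[R[i]]_d) (lam : R[i]), [/\ w^t* *m w = 1%:M,
    D = lam *: (w *m w^t*) & diamond_norm (sigmaz_channel D) = 2 * complex.Re `|lam|].
Proof.
move=> diamondE.
have [x0 _ mu_max] := @arg_maxP _ R _ (Ordinal d_gt0) predT
  (fun x => complex.Re `|mu 0 x|) isT.
have mu_le x : `|mu 0 x| <= `|mu 0 x0|.
  by rewrite lecE andbC !ger0_Im // eqxx andbT; exact: mu_max.
have := diamond_norm_sigmaz_le mu_le.
rewrite diamondE me_norm_sigmaz ler_pM2l ?ltr0n // => sum_le.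
have Re_norm_ge0 x : 0 <= complex.Re `|mu 0 x|.
  by have := normr_ge0 (mu 0 x); rewrite lecE => /andP [].
have mu_eq0 j : j != x0 -> mu 0 j = 0.
  move=> /(psum_le_term_eq0 Re_norm_ge0 sum_le) Re_eq0.
  by apply/normr0_eq0; rewrite -[`|_|]RRe_real ?normr_real // Re_eq0.
exists ((row x0 V)^t*), (mu 0 x0); split.
- by rewrite trmxCK row_unitary_norm.
- by rewrite trmxCK DE (unitary_diag_single _ mu_eq0).
by rewrite (big_only1 x0) // => j /mu_eq0 -> _; rewrite normr0.
Qed.

End SigmazNorms.

Theorem corollary5 (R : realType) (d : nat) (M0 M1 N0 N1 : 'M[R[i]]_d) :
  is_proj_meas2 M0 M1 -> is_proj_meas2 N0 N1 ->
  (M0, M1) <> (N0, N1) ->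
  diamond_norm (fun X => meas_channel M0 M1 X - meas_channel N0 N1 X)
    = d%:R * me_norm (fun X => meas_channel M0 M1 X - meas_channel N0 N1 X) ->
  (exists P1 P2 P3 : 'M[R[i]]_d,
     is_projector P1 /\ is_projector P2 /\ is_projector P3 /\
     (P1 *m P2 = 0 /\ P2 *m P1 = 0) /\
     (P1 *m P3 = 0 /\ P3 *m P1 = 0) /\
     (P2 *m P3 = 0 /\ P3 *m P2 = 0) /\
     P1 + P2 + P3 = 1%:M /\
     \rank P2 = 1%N /\
     ((M0 = P1 + P2 /\ N0 = P1) \/ (M0 = P1 /\ N0 = P1 + P2)))
  /\ diamond_norm (fun X => meas_channel M0 M1 X - meas_channel N0 N1 X) = 2.
Proof.
move=> [M0_proj [_ M01]] [N0_proj [_ N01]] MN_neq.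
rewrite (boolp.funext (fun X => meas_channel_diff X M01 N01)).
set D := M0 - N0.
have D_neq0 : D != 0.
  apply/eqP => /subr0_eq M0N0; apply: MN_neq.
  by rewrite -(addKr M0 M1) -(addKr N0 N1) M01 N01 M0N0.
have d_gt0 : (0 < d)%N.
  case: posnP => // d0; case/eqP: D_neq0; apply/matrixP => i.
  by move: (ltn_ord i); rewrite {2}d0.
have [_ M0h] := M0_proj; have [_ N0h] := N0_proj.
have Dh : D^t* = D by rewrite /D linearB /= map_mxB -!adjE M0h N0h.
have [Vu DE mu_real] := spectral_hermitian Dh.
move=> /(diamond_eq_me_rank_one d_gt0 Vu mu_real DE) [w [lam [w_unit DE1 ->]]].
have lam_neq0 : lam != 0 by apply: contraNneq D_neq0 => lam0; rewrite DE1 lam0 scale0r.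
have M0E : M0 = N0 + lam *: (w *m w^t*) by rewrite -DE1 addrC subrK.
have [coarse lam_norm1] := projector_rank_one_gap M0_proj N0_proj w_unit lam_neq0 M0E.
by split; rewrite // lam_norm1 mulr1.
Qed.
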